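(* Let $q$ be a prime power and $n\ge 2$. For every integer $r\ge0$ with $r\equiv n\pmod 2$ and $r+2\le n$, we have $c_{r+2}(q,n)<c_r(q,n)$; that is, $c_r(q,n)$ is decreasing in $r$ (over $r$ of the parity of $n$).
   Context: Let ${\mathbb F}_q$ be the finite field of order $q$. A differential on ${\mathbb F}_q^n$ is a linear map $D$ with $D^2=0$; its homology is $\ker D/\operatorname{im}D$, whose dimension has the parity of $n$. $c_r(q,n)$ denotes the number of differentials on ${\mathbb F}_q^n$ whose homology has dimension $r$. *)

From HB Require Import structures.
From mathcomp Require Import all_boot all_order all_algebra all_fingroup all_field.
Set Implicit Arguments. Unset Strict Implicit. Unset Printing Implicit Defensive.
Import GRing.Theory.
Local Open Scope ring_scope.

Definition is_differential (F : finFieldType) (n : nat) (D : 'M[F]_n) : bool :=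
  D *m D == 0.

(* dim (ker D / im D) = dim ker D - dim im D (im D is contained in ker D
   for a differential). kermx D is the (row) kernel, \rank D = dim im D. *)
Definition homology_dim (F : finFieldType) (n : nat) (D : 'M[F]_n) : nat :=
  (\rank (kermx D) - \rank D)%N.

(* c_r(q,n) with q = #|F| *)
Definition c (F : finFieldType) (r n : nat) : nat :=
  #|[set D : 'M[F]_n | is_differential D && (homology_dim D == r)]|.

From HB Require Import structures.
From mathcomp Require Import all_boot all_order all_algebra all_fingroup all_field.
From mathcomp Require Import zify ring.
Set Implicit Arguments. Unset Strict Implicit. Unset Printing Implicit Defensive.
Import GRing.Theory.

(* A differential D of rank k on F^n has homology of dimension n - 2k, and
   factors as D = X Y with X an injective n x k and Y a surjective k x n
   matrix such that Y X = 0, uniquely up to (X, Y) ~ (X G, G^-1 Y) for G in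
   GL_k.  Counting the pairs (Y, X) in two ways gives
     #{D^2 = 0, rank D = k} * |GL_k| = f(k, n) * f(k, n - k),
   where f(k, m) is the number of linearly independent k-tuples in F^m.
   Comparing these closed forms for k and k + 1 shows that the number of
   differentials grows with the rank as long as 2(k + 1) <= n. *)

(* Applied with S0, S1 the numbers of square-zero matrices of ranks j, j + 1
   in F^n, n = j + m + 1, g = |GL_j|, x = q^j and s = q^m. *)
Lemma count_ratio_lt (S0 S1 g f0 f1 f2 q x s : nat) :
    1 < q -> 0 < x -> x * q <= s -> 0 < g -> 0 < f0 -> 0 < f2 ->
    S0 * g = f0 * f1 -> f1 * (s * q - x) = (s * q - 1) * x * f2 ->
    S1 * ((x * q - 1) * x * g) = f0 * (x * (s * q) - x) * (f2 * (s - x)) ->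
  S0 < S1.
Proof.
move=> q_gt1 x_gt0 le_xq_s.
have x_lt_sq : x < s * q by nia.
have gap : (x * q - 1) * x < (s - x) * (s * q - x).
  rewrite (@leq_trans (x * q * x)) ?ltn_pmul2r //; first by lia.
  by rewrite mulnC leq_mul //; nia.
move=> g_gt0 f0_gt0 f2_gt0 count0 shift.
have -> : x * (s * q) - x = (s * q - 1) * x by rewrite mulnBl mul1n mulnC.
move=> count1; set K := (x * q - 1) * x * g * (s * q - x).
have K_gt0 : 0 < K by rewrite !muln_gt0 x_gt0 g_gt0 !subn_gt0 x_lt_sq andbT; nia.
rewrite -(ltn_pmul2r K_gt0).
have -> : S0 * K = f0 * f2 * ((s * q - 1) * x * ((x * q - 1) * x)).
  transitivity (S0 * g * ((x * q - 1) * x) * (s * q - x)); first by rewrite /K; ring.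
  rewrite count0; transitivity (f0 * (f1 * (s * q - x)) * ((x * q - 1) * x)).
    by ring.
  by rewrite shift; ring.
have -> : S1 * K = f0 * f2 * ((s * q - 1) * x * ((s - x) * (s * q - x))).
  transitivity (S1 * ((x * q - 1) * x * g) * (s * q - x)); first by rewrite /K; ring.
  by rewrite count1; ring.
have sq_gt1 : 1 < s * q by apply: leq_ltn_trans x_lt_sq.
by rewrite !ltn_pmul2l ?muln_gt0 ?f0_gt0 ?subn_gt0 ?sq_gt1.
Qed.

Section SquareZeroMatrices.
Variable F : finFieldType.
Local Open Scope ring_scope.
Local Notation q := #|F|.

Definition frames k m := #|[pred A : 'M[F]_(k, m) | row_free A]|.

Lemma frames0 m : frames 0 m = 1%N.
Proof.
rewrite /frames (@eq_card1 _ (0 : 'M_(0, m))) // => A.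
by rewrite !inE /row_free [A]flatmx0 mxrank.unlock !eqxx.
Qed.

(* A free family of k rows extends by any of the q^m - q^k rows outside its
   span (as in the proof of card_GL). *)
Lemma framesS k m : frames k.+1 m = (frames k m * (q ^ m - q ^ k))%N.
Proof.
rewrite /frames -sum_nat_const /= -sum1_card -add1n.
rewrite (partition_big dsubmx [pred A : 'M[F]_(k, m) | row_free A]) /= => [|A]; last first.
  rewrite !inE /row_free -{1}(vsubmxK A); move: {A}(_ A) (_ A) => Ad Au Afull.
  rewrite eqn_leq rank_leq_row -(leq_add2l (\rank Au)) -mxrank_sum_cap.
  rewrite {1 3}[@mxrank]lock addsmxE (eqnP Afull) -lock -addnA.
  by rewrite leq_add ?rank_leq_row ?leq_addr.
apply: eq_bigr => A freeA; rewrite (reindex (col_mx^~ A)) /=; last first.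
  exists usubmx => [v _ | vA]; first by rewrite col_mxKu.
  by case/andP=> _ /eqP <-; rewrite vsubmxK.
transitivity #|~: [set v *m A | v in 'rV_k]|; last first.
  rewrite cardsCs setCK card_imset ?card_mx ?card_ord ?mul1n //.
  exact: row_free_inj.
rewrite -sum1_card; apply: eq_bigl => v; rewrite !inE col_mxKd eqxx.
rewrite andbT /row_free eqn_leq rank_leq_row /= -(leq_add2r (\rank (v :&: A)%MS)).
rewrite -addsmxE mxrank_sum_cap (eqnP freeA) addnAC leq_add2r.
rewrite (ltn_leqif (mxrank_leqif_sup _)) ?capmxSl // sub_capmx submx_refl.
by congr (~~ _); apply/submxP/imsetP=> [] [u]; exists u.
Qed.

Lemma framesE k m : frames k m = \prod_(i < k) (q ^ m - q ^ i)%N.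
Proof.
elim: k => [|k IHk]; first by rewrite frames0 big_ord0.
by rewrite framesS IHk big_ord_recr.
Qed.

Lemma frames_gt0 k m : (k <= m)%N -> (0 < frames k m)%N.
Proof.
move=> le_km; rewrite framesE prodn_gt0 // => i.
by rewrite subn_gt0 ltn_exp2l ?card_finNzRing_gt1 // (leq_trans (ltn_ord i)).
Qed.

Lemma framesSS k m : frames k.+1 m.+1 = ((q ^ m.+1 - 1) * q ^ k * frames k m)%N.
Proof.
rewrite !framesE big_ord_recl expn0 -mulnA; congr (_ * _)%N.
rewrite -[in (q ^ k)%N](card_ord k) -prod_nat_const -big_split /=.
by apply: eq_bigr => i _; rewrite /bump /= mulnBr -!expnS.
Qed.

Lemma card_row_full k m : #|[set X : 'M[F]_(m, k) | row_full X]| = frames k m.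
Proof.
rewrite /frames -(card_imset _ (@trmx_inj _ m k)); apply: eq_card => A.
rewrite !inE; apply/imsetP/idP => [[X] | freeA].
  by rewrite inE /row_full => /eqP rankX ->; rewrite /row_free mxrank_tr rankX.
by exists A^T; rewrite ?trmxK // inE /row_full mxrank_tr.
Qed.

Lemma card_row_full_annihilators k m (Y : 'M[F]_(k, k + m)) : row_free Y ->
  #|[set X : 'M[F]_(k + m, k) | row_full X && (Y *m X == 0)]| = frames k m.
Proof.
move=> freeY; set C := col_ebase Y; set E := row_ebase Y.
have uC : C \in unitmx by apply: col_ebase_unit.
have uE : E \in unitmx by apply: row_ebase_unit.
have defY : Y = C *m pid_mx k *m E by rewrite -{1}(mulmx_ebase Y) (eqP freeY).
have fullEi : row_full (invmx E) by rewrite row_full_unit unitmx_inv.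
pose embed (Z : 'M[F]_(m, k)) := invmx E *m col_mx 0 Z.
have embed_inj : injective embed.
  by move=> Z1 Z2 /(row_full_inj fullEi)/eq_col_mx[].
rewrite -card_row_full -(card_imset _ embed_inj); apply: eq_card => X.
rewrite !inE; apply/andP/imsetP => [[fullX /eqP YX0] | [Z]]; last first.
  rewrite inE => fullZ ->; rewrite /embed /row_full eqmxMfull // rank_col_0mx.
  by rewrite (eqP fullZ) eqxx defY -!mulmxA mulKVmx // pid_mx_row mul_row_col
    mulmx0 mul0mx addr0 mulmx0.
have defEX : E *m X = col_mx 0 (dsubmx (E *m X)).
  have fullC : row_full C by rewrite row_full_unit.
  have : C *m (pid_mx k *m (E *m X)) = C *m 0 by rewrite !mulmxA -defY YX0 mulmx0.
  move/(row_full_inj fullC); rewrite -[E *m X]vsubmxK pid_mx_row mul_row_col.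
  by rewrite mul1mx mul0mx addr0 col_mxKd => ->.
exists (dsubmx (E *m X)); last by rewrite /embed -defEX mulKmx.
by rewrite inE /row_full -(rank_col_0mx k) -defEX eqmxMfull // row_full_unit.
Qed.

Definition exact_pairs k n := [set p : 'M[F]_(k, n) * 'M[F]_(n, k) |
  [&& row_free p.1, row_full p.2 & p.1 *m p.2 == 0]].

Lemma card_exact_pairs k m :
  #|exact_pairs k (k + m)| = (frames k (k + m) * frames k m)%N.
Proof.
rewrite -sum1_card (eq_bigl _ _ (fun p => in_set _ p)) /=.
rewrite -(pair_big_dep (fun Y : 'M[F]_(k, k + m) => row_free Y)
  (fun Y (X : 'M[F]_(k + m, k)) => row_full X && (Y *m X == 0)) (fun _ _ => 1%N)) /=.
rewrite -sum_nat_const; apply: eq_bigr => Y freeY.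
by rewrite sum1_card -(card_row_full_annihilators freeY) cardsE.
Qed.

Definition sqzero_rank k n := [set D : 'M[F]_n | (D *m D == 0) && (\rank D == k)].

Lemma full_rank_factorization n k (D : 'M[F]_n) : \rank D = k ->
  exists X : 'M_(n, k), exists2 Y : 'M_(k, n), row_full X & row_free Y /\ D = X *m Y.
Proof.
move=> rankD; have le_kn : (k <= n)%N by rewrite -rankD rank_leq_row.
exists (col_ebase D *m pid_mx k), (pid_mx k *m row_ebase D).
  by rewrite /row_full eqmxMfull ?rank_pid_mx ?row_full_unit ?col_ebase_unit.
split; first by rewrite /row_free mxrankMfree ?rank_pid_mx ?row_free_unit ?row_ebase_unit.
by rewrite -mulmxA (mulmxA (pid_mx k)) pid_mx_id // mulmxA -rankD mulmx_ebase.
Qed.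

(* The fibre over X0 *m Y0 is a torsor under GL_k acting by (G^-1 Y, X G). *)
Lemma card_full_rank_factorizations n k (X0 : 'M[F]_(n, k)) (Y0 : 'M[F]_(k, n)) :
    row_full X0 -> row_free Y0 ->
  #|[set p : 'M_(k, n) * 'M_(n, k) |
     [&& row_free p.1, row_full p.2 & p.2 *m p.1 == X0 *m Y0]]| = frames k k.
Proof.
move=> fullX0 freeY0; have [L LX0] := row_fullP fullX0; have [R Y0R] := row_freeP freeY0.
pose act (G : 'M[F]_k) := (invmx G *m Y0, X0 *m G).
have act_inj : injective act by move=> G1 G2 [_ /(row_full_inj fullX0)].
rewrite /frames -(card_imset _ act_inj); apply: eq_card => [[Y X]].
rewrite !inE /=; apply/idP/imsetP => [/and3P[freeY fullX /eqP XY] | [G]]; last first.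
  rewrite inE row_free_unit => uG [-> ->].
  rewrite /row_free /row_full eqmxMfull ?row_full_unit ?unitmx_inv // (eqP freeY0).
  rewrite mxrankMfree ?row_free_unit // (eqP fullX0) !eqxx /=.
  by rewrite -mulmxA (mulmxA G) mulmxV // mul1mx.
have [Lx LxX] := row_fullP fullX; have [Ry YRy] := row_freeP freeY.
have defX : X = X0 *m (Y0 *m Ry) by rewrite mulmxA -XY -mulmxA YRy mulmx1.
have defY : Y = (Lx *m X0) *m Y0 by rewrite -mulmxA -XY mulmxA LxX mul1mx.
have GH : (Y0 *m Ry) *m (Lx *m X0) = 1%:M.
  have : L *m (X *m Y) *m R = 1%:M by rewrite XY mulmxA LX0 mul1mx Y0R.
  by rewrite {1}defX {1}defY !mulmxA LX0 mul1mx -!mulmxA Y0R mulmx1.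
have [uG _] := mulmx1_unit GH.
exists (Y0 *m Ry); first by rewrite inE row_free_unit.
have invG : invmx (Y0 *m Ry) = Lx *m X0.
  by rewrite -[Lx *m X0]mul1mx -(mulVmx uG) -mulmxA GH mulmx1.
by rewrite /act invG -defX -defY.
Qed.

Lemma card_exact_pairs_sqzero k n :
  #|exact_pairs k n| = (#|sqzero_rank k n| * frames k k)%N.
Proof.
rewrite -sum1_card (partition_big (fun p => p.2 *m p.1) (mem (sqzero_rank k n))) /=;
  last first.
  move=> [Y X]; rewrite !inE /= => /and3P[freeY fullX /eqP YX].
  by rewrite mulmxA -(mulmxA X) YX mulmx0 mul0mx mxrankMfree // (eqP fullX) !eqxx.
rewrite -sum_nat_const; apply: eq_bigr => D; rewrite inE => /andP[/eqP DD /eqP rankD].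
have [X0 [Y0 fullX0 [freeY0 defD]]] := full_rank_factorization rankD.
rewrite sum1dep_card -(card_full_rank_factorizations fullX0 freeY0) -defD.
apply: eq_card => [[Y X]]; rewrite !inE /=.
apply/andP/and3P => [[/and3P[-> -> _] //] | [freeY fullX /eqP XY]].
split; rewrite ?freeY ?fullX ?XY //=; apply/eqP.
apply: (row_free_inj freeY); apply: (row_full_inj fullX).
by rewrite mul0mx mulmx0 -!mulmxA (mulmxA X) XY DD.
Qed.

Lemma card_sqzero_rank k m :
  (#|sqzero_rank k (k + m)| * frames k k = frames k (k + m) * frames k m)%N.
Proof. by rewrite -card_exact_pairs_sqzero card_exact_pairs. Qed.

Local Close Scope ring_scope.

Lemma card_sqzero_rank_lt j n : j.*2.+2 <= n ->
  #|sqzero_rank j n| < #|sqzero_rank j.+1 n|.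
Proof.
move=> le_n; set m := n - j.+1.
have lt_jm : j < m by rewrite /m; lia.
have def_n : n = j + m.+1 by rewrite /m; lia.
have q_gt1 : 1 < q := card_finNzRing_gt1 F.
have pow_n : q ^ n = q ^ j * (q ^ m * q) by rewrite def_n expnD expnSr.
have count0 := card_sqzero_rank j m.+1; rewrite -def_n in count0.
have count1 := card_sqzero_rank j.+1 m.
rewrite addSnnS -def_n framesSS !framesS pow_n !expnSr in count1.
have shift : frames j m.+1 * (q ^ m * q - q ^ j) = (q ^ m * q - 1) * q ^ j * frames j m.
  by rewrite -expnSr -framesS framesSS.
apply: (count_ratio_lt q_gt1 _ _ _ _ _ count0 shift count1).
- by rewrite expn_gt0 ltnW.
- by rewrite -expnSr leq_pexp2l // ltnW.
- exact: frames_gt0.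
- by rewrite frames_gt0 // def_n leq_addr.
- exact/frames_gt0/ltnW.
Qed.

End SquareZeroMatrices.

Lemma c_sqzero_rank (F : finFieldType) r k n :
  n = (r + k.*2)%N -> c F r n = #|sqzero_rank F k n|.
Proof.
move=> def_n; apply: eq_card => D; rewrite !inE /is_differential /homology_dim.
rewrite mxrank_ker; case: eqP => //= DD.
have : (\rank D <= n - \rank D)%N by rewrite -mxrank_ker mxrankS // sub_kermx DD.
by move=> le_rank; apply/eqP/eqP; lia.
Qed.

Theorem mainTheorem7 (F : finFieldType) (n r : nat) :
  (2 <= n)%N -> odd r = odd n -> (r + 2 <= n)%N ->
  (c F (r + 2) n < c F r n)%N.
Proof.
move=> _ odd_rn le_r2n.
have even_nr : ~~ odd (n - r).
  by rewrite oddB ?(leq_trans (leq_addr 2 r)) // odd_rn addbb.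
have [k def_n] : exists k, n = (r + 2 + k.*2)%N.
  by exists (n - r)./2.-1; move: (even_halfK even_nr); lia.
rewrite (c_sqzero_rank F def_n) (@c_sqzero_rank F r k.+1); last by rewrite def_n; lia.
by apply: card_sqzero_rank_lt; rewrite def_n; lia.
Qed.
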